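(* Let $M=M(S^2;\frac{q_1}{p_1},\frac{q_2}{p_2},\frac{q_3}{p_3})$ with $e(M)\neq0$. If every element of $H_1(M,\mathbb{Z})$ has order dividing $2$, or if $p_1,p_2,p_3$ are weakly coprime, then $M$ has no exceptional abelian characters, i.e. $x_M=0$.
   Context: $M(S^2;\frac{q_1}{p_1},\frac{q_2}{p_2},\frac{q_3}{p_3})$ ($(p_i,q_i)$ coprime, $p_i\ge1$) is the closed Seifert manifold obtained from $S_{0,3}\times S^1$ by gluing solid tori whose meridians are $p_ic_i+q_ih_i$; $e(M)=\sum_iq_i/p_i$; $\pi_1(M)=\langle c_1,c_2,c_3,h\mid [c_i,h]=1=c_i^{p_i}h^{q_i},\ c_1c_2c_3=1\rangle$. Integers $p_1,p_2,p_3$ are weakly coprime if one of them is coprime with each of the other two. An abelian character is the trace of a diagonal representation $\pi_1(M)\to\mathrm{SL}_2(\mathbb{C})$; it is exceptional if it is the trace of a representation $\rho$ with $\rho(h)=\pm I$ and $\rho(c_i)\neq\pm I$ for $i=1,2,3$; $x_M$ is the number of exceptional abelian characters. *)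

From mathcomp Require Import all_boot all_order all_algebra.
From mathcomp Require Import complex Rstruct.
Set Implicit Arguments. Unset Strict Implicit. Unset Printing Implicit Defensive.
Import Order.TTheory GRing.Theory Num.Theory.
Local Open Scope ring_scope.

Definition CC : Type := (Rdefinitions.R)[i].

(* Generators of pi_1(M) = < c_1, c_2, c_3, h | ... >, indexed by 'I_4:
   c_i is gc i (i : 'I_3, i.e. c_1,c_2,c_3 are gc 0, gc 1, gc 2) and h is gh. *)
Definition gc (i : 'I_3) : 'I_4 := widen_ord (leqnSn 3) i.
Definition gh : 'I_4 := ord_max.
Definition i0 : 'I_3 := inord 0.
Definition i1 : 'I_3 := inord 1.
Definition i2 : 'I_3 := inord 2.

(* Words in the generators and their inverses: (g, true) stands for g^-1.
   Every element of pi_1(M) is represented by such a word. *)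
Definition word := seq ('I_4 * bool).

Definition assignment := 'I_4 -> 'M[CC]_2.

Definition eval_word (r : assignment) (w : word) : 'M[CC]_2 :=
  \prod_(x <- w) (if x.2 then (r x.1)^-1 else r x.1).

Definition is_SL2_rep (p : 'I_3 -> nat) (q : 'I_3 -> int) (r : assignment) :=
  [/\ forall g, \det (r g) = 1,
      forall i, r (gc i) * r gh = r gh * r (gc i),
      forall i, r (gc i) ^+ p i * r gh ^ q i = 1
    & r (gc i0) * r (gc i1) * r (gc i2) = 1].

Definition character (r : assignment) : word -> CC :=
  fun w => \tr (eval_word r w).

Definition is_diag_rep (r : assignment) := forall g, is_diag_mx (r g).

Definition abelian_character p q (chi : word -> CC) :=
  exists r, [/\ is_SL2_rep p q r, is_diag_rep r & chi = character r].

Definition exceptional_abelian_character p q (chi : word -> CC) :=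
  abelian_character p q chi /\
  exists rho, [/\ is_SL2_rep p q rho, chi = character rho,
                  rho gh = 1 \/ rho gh = -1
                & forall i, rho (gc i) <> 1 /\ rho (gc i) <> -1].

Definition euler_number (p : 'I_3 -> nat) (q : 'I_3 -> int) : rat :=
  \sum_(i < 3) (q i)%:~R / (p i)%:R.

(* H_1(M,Z) = abelianization of pi_1(M) = Z^4 / L, where Z^4 has basis
   (c_1, c_2, c_3, h) and L is spanned by the relators
   p_i c_i + q_i h (i = 1,2,3) and c_1 + c_2 + c_3. *)
Definition in_relation_lattice (p : 'I_3 -> nat) (q : 'I_3 -> int)
    (v : 'I_4 -> int) :=
  exists (a : 'I_3 -> int) (b : int),
    (forall i, v (gc i) = a i * (p i)%:Z + b) /\
    v gh = \sum_(i < 3) a i * q i.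

Definition H1_exponent_2 p q :=
  forall v : 'I_4 -> int, in_relation_lattice p q (fun g => 2 * v g).

Definition weakly_coprime (p : 'I_3 -> nat) :=
  exists i : 'I_3, forall j : 'I_3, j != i -> coprime (p i) (p j).

From mathcomp Require Import all_boot all_order all_algebra.
From mathcomp Require Import complex Rstruct.
From mathcomp Require Import ring.

(* Let chi be the trace of a diagonal representation r and of a representation
   rho with rho(h) = +-I and rho(c_i) <> +-I.  A matrix of SL_2 with trace +-2
   is +-(I + N) with N^2 = 0, so its k-th power is +-(I + kN); if some positive
   power is diagonal, then N = 0.  Applied to r(h) this gives r(h) = eps I with
   eps = +-1, so the diagonal entries lam_i of r(c_i), together with eps, define
   a homomorphism H_1(M,Z) -> C^*.  Applied to rho(c_i), whose p_i-th power is
   rho(h)^(-q_i) = +-I, it shows that lam_i^2 <> 1 for every i.  But if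
   2 H_1(M,Z) = 0, then 2 c_1 vanishes in H_1 and lam_1^2 = 1; and if p_1 is
   coprime to p_2 and p_3, then lam_1 lam_2 lam_3 = 1 and lam_j^(2 p_j) = 1
   force lam_1^2 = 1. *)

Set Implicit Arguments.
Unset Strict Implicit.
Unset Printing Implicit Defensive.

Import Order.TTheory GRing.Theory Num.Theory.
Local Open Scope ring_scope.

Lemma sqr_eq1_neq0 (R : nzSemiRingType) (x : R) : x ^+ 2 = 1 -> x != 0.
Proof. by apply: contra_eq_neq => ->; rewrite expr0n eq_sym oner_neq0. Qed.

Lemma expr_gcdn_eq1 (R : pzSemiRingType) (x : R) (m n : nat) :
  x ^+ m = 1 -> x ^+ n = 1 -> x ^+ gcdn m n = 1.
Proof.
move=> xm xn; have [->|m_gt0] := posnP m; first by rewrite gcd0n.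
have [a _ /dvdnP[t def_t]] := Bezoutl n m_gt0.
have : x ^+ (gcdn m n + a * n) = 1 by rewrite def_t mulnC exprM xm expr1n.
by rewrite exprD mulnC exprM xn expr1n mulr1.
Qed.

Lemma coprime_prodr (I : Type) (r : seq I) (P : pred I) (f : I -> nat) (m : nat) :
  (forall i, P i -> coprime m (f i)) -> coprime m (\prod_(i <- r | P i) f i).
Proof.
move=> cop; apply: (big_ind (coprime m)) => [|a b|//]; first exact: coprimen1.
by rewrite coprimeMr => -> ->.
Qed.

Lemma prod_expr_coprime_eq1 (R : comPzSemiRingType) (I : finType)
    (x : I -> R) (m : I -> nat) (d : nat) (i : I) :
  \prod_j x j = 1 -> (forall j, x j ^+ (m j * d) = 1) ->
  (forall j, j != i -> coprime (m i) (m j)) -> x i ^+ d = 1.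
Proof.
move=> prod_x xm cop; pose P := (\prod_(j | j != i) m j)%N.
have xP : x i ^+ (P * d) = 1.
  have : (\prod_j x j) ^+ (P * d) = 1 by rewrite prod_x expr1n.
  rewrite (bigD1 i) //= exprMn -prodrXl big1 ?mulr1 // => j ji.
  have /dvdnP[t ->] : (m j %| P)%N by rewrite /P (bigD1 j) //= dvdn_mulr.
  by rewrite -mulnA mulnC exprM xm expr1n.
have gcd_d : gcdn (m i * d) (P * d) = d.
  by rewrite -muln_gcdl (eqP (coprime_prodr _ cop)) mul1n.
by rewrite -gcd_d (expr_gcdn_eq1 (xm i) xP).
Qed.

Lemma big_ord2 (T : Type) (idx : T) (op : Monoid.law idx) (F : 'I_2 -> T) :
  \big[op/idx]_(i < 2) F i = op (F 0) (F 1).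
Proof. by rewrite big_ord_recl big_ord1; do !f_equal; apply: val_inj. Qed.

Lemma big_ord3 (T : Type) (idx : T) (op : Monoid.law idx) (F : 'I_3 -> T) :
  \big[op/idx]_(i < 3) F i = op (op (F i0) (F i1)) (F i2).
Proof.
rewrite !big_ord_recr big_ord0 Monoid.mul1m /=.
by do !f_equal; apply: val_inj; rewrite /= inordK.
Qed.

Lemma gc_inj : injective gc.
Proof. by move=> i j /(congr1 val) /= /val_inj. Qed.

Lemma gh_neq_gc (i : 'I_3) : gh != gc i.
Proof. by apply/eqP => /(congr1 val) /= e; have := ltn_ord i; rewrite -e. Qed.

(* [lam i] and [eps] are the images of [c_i] and [h] under a homomorphism
   from [H_1(M,Z)] to the multiplicative group of [F]. *)
Definition is_H1_hom (F : fieldType) (p : 'I_3 -> nat) (q : 'I_3 -> int)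
    (lam : 'I_3 -> F) (eps : F) :=
  [/\ eps != 0, forall i, lam i ^+ p i * eps ^ q i = 1 & \prod_i lam i = 1].

Section H1Hom.
Variables (F : fieldType) (p : 'I_3 -> nat) (q : 'I_3 -> int).
Variables (lam : 'I_3 -> F) (eps : F).
Hypothesis hom : is_H1_hom p q lam eps.

Lemma H1_hom_neq0 i : lam i != 0.
Proof.
case: hom => _ _ prod1; apply: contra_eq_neq prod1 => lam0.
by rewrite (bigD1 i) //= lam0 mul0r eq_sym oner_neq0.
Qed.

Lemma H1_hom_relation_lattice (v : 'I_4 -> int) :
  in_relation_lattice p q v -> \prod_i lam i ^ v (gc i) * eps ^ v gh = 1.
Proof.
case: hom => eps0 rel prod1 [a [b [vc ->]]].
have lam_p i : lam i ^+ p i = (eps ^ q i)^-1.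
  by rewrite -[LHS]mulr1 -(mulfV (expfz_neq0 (q i) eps0)) mulrA rel mul1r.
have lam_v i : lam i ^ v (gc i) = eps ^ (- (a i * q i)) * lam i ^ b.
  rewrite vc expfzDr ?H1_hom_neq0 // [a i * _]mulrC -exprz_exp; congr (_ * _).
  change ((lam i ^+ p i) ^ a i = eps ^ (- (a i * q i))).
  by rewrite lam_p invr_expz exprz_exp mulNr mulrC.
rewrite (eq_bigr _ (fun i _ => lam_v i)) big_split /=.
rewrite -(big_morph _ (fun m n => expfzDr m n eps0) (expr0z eps)).
rewrite -(big_morph (fun x => x ^ b) (fun x y => expfzMl x y b) (exp1rz _ b)).
by rewrite prod1 exp1rz mulr1 -expfzDr // sumrN addNr expr0z.
Qed.

Lemma H1_exponent_2_sqr_eq1 : H1_exponent_2 p q -> lam i0 ^+ 2 = 1.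
Proof.
move=> /(_ (fun g => (g == gc i0)%:Z)) /H1_hom_relation_lattice.
rewrite (negPf (gh_neq_gc i0)) mulr0 expr0z mulr1 (bigD1 i0) //= eqxx.
by rewrite big1 ?mulr1 // => i ne_i; rewrite (inj_eq gc_inj) (negPf ne_i) mulr0 expr0z.
Qed.

Lemma weakly_coprime_sqr_eq1 :
  eps ^+ 2 = 1 -> weakly_coprime p -> exists i, lam i ^+ 2 = 1.
Proof.
case: hom => _ rel prod1 eps2 [i cop]; exists i.
apply: (prod_expr_coprime_eq1 prod1 _ cop) => j.
have eps_q2 : (eps ^ q j) ^+ 2 = 1.
  rewrite -[LHS]/((eps ^ q j) ^ 2%:Z) exprzAC.
  by rewrite -[eps ^ 2%:Z]/(eps ^+ 2) eps2 exp1rz.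
have := congr1 (fun x => x ^+ 2) (rel j).
by rewrite /= exprMn eps_q2 !expr1n -exprM mulr1.
Qed.

End H1Hom.

Section Matrix2.
Variable R : comPzRingType.
Implicit Types A B : 'M[R]_2.

Lemma ord2_cases (i : 'I_2) : i = 0 \/ i = 1.
Proof. by case: i => [[|[|//]] ?]; [left | right]; apply: val_inj. Qed.

Lemma mx2P A B :
  A 0 0 = B 0 0 -> A 0 1 = B 0 1 -> A 1 0 = B 1 0 -> A 1 1 = B 1 1 -> A = B.
Proof.
move=> e00 e01 e10 e11; apply/matrixP => i j.
by case: (ord2_cases i) => ->; case: (ord2_cases j) => ->.
Qed.

Lemma mulmx2E A B i j : (A * B) i j = A i 0 * B 0 j + A i 1 * B 1 j.
Proof. by rewrite -mulmxE mxE big_ord2. Qed.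

Lemma mxtrace2 A : \tr A = A 0 0 + A 1 1.
Proof. by rewrite /mxtrace big_ord2. Qed.

Lemma det_mx2 A : \det A = A 0 0 * A 1 1 - A 0 1 * A 1 0.
Proof.
rewrite (expand_det_row _ 0) big_ord2 /cofactor !det_mx11 !mxE.
have -> : lift 0 (0 : 'I_1) = 1 :> 'I_2 by apply: val_inj.
have -> : lift 1 (0 : 'I_1) = 0 :> 'I_2 by apply: val_inj.
by rewrite /= expr0 expr1; ring.
Qed.

Lemma mx2_Cayley_Hamilton A : A * A = \tr A *: A - (\det A)%:M.
Proof.
rewrite mxtrace2 det_mx2; apply: mx2P; rewrite mulmx2E !mxE /= ?mulr1n ?mulr0n.
all: ring.
Qed.

Lemma mx2_sqr_sub_eigen A s :
  \tr A = s *+ 2 -> \det A = s ^+ 2 -> (A - s%:M) ^+ 2 = 0.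
Proof.
move=> trA detA; rewrite expr2 mulrBl !mulrBr mx2_Cayley_Hamilton trA detA.
rewrite -!mulmxE mul_mx_scalar mul_scalar_mx -scalar_mxM.
by apply/matrixP => i j; rewrite !mxE; ring.
Qed.

End Matrix2.

Lemma diag_mx_mulE (R : pzSemiRingType) n (A B : 'M[R]_n.+1) i j :
  is_diag_mx A -> (A * B) i j = A i i * B i j.
Proof. by case/diag_mxP => d ->; rewrite -mulmxE mul_diag_mx !mxE eqxx mulr1n. Qed.

Lemma diag_mx_exprE (R : pzSemiRingType) n (A : 'M[R]_n.+1) k i :
  is_diag_mx A -> (A ^+ k) i i = A i i ^+ k.
Proof.
move=> dA; elim: k => [|k IHk]; first by rewrite !expr0 -idmxE mxE eqxx.
by rewrite !exprS diag_mx_mulE // IHk.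
Qed.

Lemma diag_mx_sqr_eq0 (R : idomainType) n (N : 'M[R]_n.+1) :
  is_diag_mx N -> N * N = 0 -> N = 0.
Proof.
move=> dN NN; apply/matrixP => i j; rewrite mxE.
have [<-|ij] := eqVneq i j; last exact: (is_diag_mxP dN).
by apply/eqP; rewrite -sqrf_eq0 expr2 -diag_mx_mulE // NN mxE.
Qed.

Lemma expr_scalar_addr_sqr0 (R : comPzRingType) n (N : 'M[R]_n.+1) a k :
  N * N = 0 -> (a%:M + N) ^+ k.+1 = (a ^+ k.+1)%:M + (a ^+ k *+ k.+1) *: N.
Proof.
move=> NN; elim: k => [|k IHk]; first by rewrite !expr1 expr0 scale1r.
have NNm : N *m N = 0 by rewrite mulmxE.
rewrite exprSr IHk mulrDl !mulrDr -!mulmxE !mul_scalar_mx mul_mx_scalar.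
rewrite -scalemxAl NNm scaler0 addr0 scale_scalar_mx -exprSr scalerA.
by rewrite -addrA -scalerDl mulrnAr -exprS -mulrS.
Qed.

Lemma scalar_of_diag_expr (R : numDomainType) n (B : 'M[R]_n.+1) a k :
  (0 < k)%N -> a != 0 -> (B - a%:M) ^+ 2 = 0 -> is_diag_mx (B ^+ k) ->
  B = a%:M.
Proof.
case: k => // k _ a0 nilB dBk; set N := B - a%:M.
have BE : B = a%:M + N by rewrite addrC subrK.
have NN : N * N = 0 by rewrite -expr2.
suff N0 : N = 0 by rewrite BE N0 addr0.
apply: diag_mx_sqr_eq0 NN; apply/is_diag_mxP => i j ij.
have := is_diag_mxP dBk i j ij.
rewrite BE expr_scalar_addr_sqr0 // !mxE (negPf (ij : i != j)) mulr0n add0r.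
by move/eqP; rewrite mulf_eq0 mulrn_eq0 expf_eq0 (negPf a0) andbF /= => /eqP.
Qed.

Lemma mx2_scalar_of_diag_expr (R : numDomainType) (B : 'M[R]_2) s k :
  (0 < k)%N -> s != 0 -> \tr B = s *+ 2 -> \det B = s ^+ 2 ->
  is_diag_mx (B ^+ k) -> B = s%:M.
Proof.
by move=> k_gt0 s0 trB detB; apply: scalar_of_diag_expr; rewrite ?mx2_sqr_sub_eigen.
Qed.

Lemma mulmx_scalar_eq1 (F : fieldType) n (B : 'M[F]_n.+1) c :
  B * c%:M = 1 -> B = c^-1%:M.
Proof.
rewrite -mulmxE mul_mx_scalar => cB.
have c0 : c != 0 by apply: contra_eq_neq cB => ->; rewrite scale0r eq_sym oner_neq0.
by rewrite -[B]scale1r -(mulVf c0) -scalerA cB -idmxE scalemx1.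
Qed.

Lemma pm1_scalar_mx (R : pzRingType) n (M : 'M[R]_n.+1) :
  M = 1 \/ M = -1 -> exists2 s : R, s ^+ 2 = 1 & M = s%:M.
Proof.
case=> ->; first by exists 1; rewrite ?expr1n ?idmxE.
by exists (-1); rewrite ?sqrrN ?expr1n // raddfN /= idmxE.
Qed.

Lemma character_gen (r : assignment) g : character r [:: (g, false)] = \tr (r g).
Proof. by rewrite /character /eval_word big_cons big_nil mulr1. Qed.

Lemma SL2_rep_c_expr p q r s i :
  is_SL2_rep p q r -> r gh = s%:M -> r (gc i) ^+ p i = ((s ^ q i)^-1)%:M.
Proof.
case=> _ _ rel _ rh; apply: mulmx_scalar_eq1.
by move: (rel i); rewrite rh -(fmorphXz (@scalar_mx _ 2)).
Qed.

Lemma diag_SL2_rep_H1_hom p q r eps :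
  is_SL2_rep p q r -> is_diag_rep r -> r gh = eps%:M -> eps ^+ 2 = 1 ->
  is_H1_hom p q (fun i => r (gc i) 0 0) eps.
Proof.
move=> r_rep r_diag rh /sqr_eq1_neq0 eps0; split=> // [i|].
  have := congr1 (fun M : 'M_2 => M 0 0) (SL2_rep_c_expr i r_rep rh).
  by rewrite /= diag_mx_exprE // mxE mulr1n => ->; rewrite mulVf ?expfz_neq0.
case: r_rep => _ _ _ /(congr1 (fun M : 'M_2 => M 0 0)).
by rewrite big_ord3 -mulrA diag_mx_mulE // diag_mx_mulE // mulrA -idmxE mxE.
Qed.

Section ExceptionalPair.
Variables (p : 'I_3 -> nat) (q : 'I_3 -> int) (r rho : assignment).
Hypotheses (r_rep : is_SL2_rep p q r) (r_diag : is_diag_rep r).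
Hypothesis rho_rep : is_SL2_rep p q rho.
Hypothesis tr_r_rho : forall g, \tr (r g) = \tr (rho g).
Hypothesis rho_h : rho gh = 1 \/ rho gh = -1.

Lemma diag_rep_h_scalar : exists2 eps, eps ^+ 2 = 1 & r gh = eps%:M.
Proof.
have [s s2 rho_s] := pm1_scalar_mx rho_h; exists s => //.
apply: (@mx2_scalar_of_diag_expr _ _ _ 1) => //.
- exact: sqr_eq1_neq0.
- by rewrite tr_r_rho rho_s mxtrace_scalar.
- by case: r_rep => -> _ _ _; rewrite s2.
- by rewrite expr1; apply: r_diag.
Qed.

Lemma exceptional_sqr_neq1 i :
  (0 < p i)%N -> rho (gc i) <> 1 /\ rho (gc i) <> -1 -> r (gc i) 0 0 ^+ 2 != 1.
Proof.
move=> p_gt0 [rho_c1 rho_cN1]; set lam := r (gc i) 0 0.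
apply/negP => /eqP lam2; have lam0 := sqr_eq1_neq0 lam2.
have lam_lam : lam * lam = 1 by rewrite -expr2.
have r11 : r (gc i) 1 1 = lam.
  case: r_rep => /(_ (gc i)); rewrite det_mx2 (is_diag_mxP (r_diag _) 0 1) //.
  by rewrite mul0r subr0 -[X in _ = X]lam_lam => /(mulfI lam0).
have [s _ rho_s] := pm1_scalar_mx rho_h.
have rho_c : rho (gc i) = lam%:M.
  apply: (mx2_scalar_of_diag_expr p_gt0) => //.
  - by rewrite -tr_r_rho mxtrace2 r11.
  - by case: rho_rep => -> _ _ _; rewrite lam2.
  - by rewrite (SL2_rep_c_expr i rho_rep rho_s) scalar_mx_is_diag.
move/eqP: lam2; rewrite sqrf_eq1 => /orP[] /eqP lam_pm1.
- by apply: rho_c1; rewrite rho_c lam_pm1 idmxE.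
- by apply: rho_cN1; rewrite rho_c lam_pm1 raddfN /= idmxE.
Qed.

End ExceptionalPair.

Theorem proposition5p5 (p : 'I_3 -> nat) (q : 'I_3 -> int) :
  (forall i, (0 < p i)%N) ->
  (forall i, coprime (p i) `|q i|%N) ->
  euler_number p q != 0 ->
  H1_exponent_2 p q \/ weakly_coprime p ->
  forall chi : word -> CC, ~ exceptional_abelian_character p q chi.
Proof.
move=> p_gt0 _ _ H1_or_coprime chi.
move=> [[r [r_rep r_diag ->]] [rho [rho_rep chi_rho rho_h rho_c]]].
have tr_r_rho g : \tr (r g) = \tr (rho g) by rewrite -!character_gen chi_rho.
have [eps eps2 r_h] := diag_rep_h_scalar r_rep r_diag tr_r_rho rho_h.
have hom := diag_SL2_rep_H1_hom r_rep r_diag r_h eps2.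
have lam_sqr_neq1 i :=
  exceptional_sqr_neq1 r_rep r_diag rho_rep tr_r_rho rho_h (p_gt0 i) (rho_c i).
case: H1_or_coprime => [H1 | wc].
  by apply/eqP/lam_sqr_neq1: (H1_exponent_2_sqr_eq1 hom H1).
have [j lam_j] := weakly_coprime_sqr_eq1 hom eps2 wc.
by apply/eqP/lam_sqr_neq1: lam_j.
Qed.
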